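(* For every real $\alpha$ with $0\le\alpha<8$, all Fourier coefficients of $E_2^{(4)}(\tau)-\alpha\Delta_2^{(4)}(\tau)$ (i.e. the coefficients of $q^n$ for all $n\ge0$) are positive.
   Context: $q=e^{2\pi i\tau}$, $\tau\in\mathfrak H$. $E_2(\tau)=1-24\sum_{n\ge1}\sigma(n)q^n$ with $\sigma(n)=\sum_{d\mid n}d$; $E_2^{(4)}(\tau)=\frac13(4E_2(4\tau)-E_2(\tau))$; $\Delta_2^{(4)}(\tau)=\eta(4\tau)^8/\eta(2\tau)^4=\sum_{n\ge1,\ n\text{ odd}}\sigma(n)q^n$, where $\eta(\tau)=q^{1/24}\prod_{n\ge1}(1-q^n)$. *)

(* q-expansions are represented by their coefficient
   sequences (nat -> R): coefficient of q^n. *)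
From mathcomp Require Import all_boot all_order all_algebra.
Set Implicit Arguments. Unset Strict Implicit. Unset Printing Implicit Defensive.
Import Order.TTheory GRing.Theory Num.Theory.
Local Open Scope ring_scope.

Definition sigma (n : nat) : nat := (\sum_(d <- divisors n) d)%N.

(* coefficients of E_2(tau) = 1 - 24 sum_{n>=1} sigma(n) q^n *)
Definition E2_coef (R : ringType) (n : nat) : R :=
  if n == 0%N then 1 else - (24%:R * (sigma n)%:R).

(* coefficients of E_2(4 tau): substitute q -> q^4 *)
Definition E2_at4_coef (R : ringType) (n : nat) : R :=
  if (4 %| n)%N then E2_coef R (n %/ 4) else 0.

Definition E24_coef (R : fieldType) (n : nat) : R :=
  (4%:R * E2_at4_coef R n - E2_coef R n) / 3%:R.

Definition Delta24_coef (R : ringType) (n : nat) : R :=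
  if odd n then (sigma n)%:R else 0.

(** Off the multiples of 4 the coefficient of [q^n] in [E_2^(4)] is [8 sigma(n)],
    which beats [alpha sigma(n)] as [alpha < 8]; at [n = 4m] it is
    [8 (sigma(4m) - 4 sigma(m))], positive because the divisors of [4m] contain
    [1] besides the [4d] for [d | m], while [Delta_2^(4)] vanishes there. *)
From mathcomp Require Import all_boot all_order all_algebra.
From mathcomp Require Import ring.
Import Order.TTheory GRing.Theory Num.Theory.
Local Open Scope ring_scope.

Lemma leq_sum_uniq_sub (I : eqType) (s s' : seq I) (F : I -> nat) :
  uniq s -> uniq s' -> {subset s <= s'} ->
  (\sum_(i <- s) F i <= \sum_(i <- s') F i)%N.
Proof. exact: (uniq_sub_le_big leqnn (fun x y => leq_addr y x)). Qed.

(* [divisors 0 = [:: 1]], so this holds at [n = 0] as well. *)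
Lemma sigma_gt0 n : (0 < sigma n)%N.
Proof.
have := @leq_sum_uniq_sub _ [:: 1%N] (divisors n) id isT (divisors_uniq n).
rewrite big_seq1; apply=> x; rewrite inE => /eqP ->; exact: divisor1.
Qed.

Lemma sigma_mul_gt d m : (1 < d)%N -> (0 < m)%N -> (d * sigma m < sigma (d * m))%N.
Proof.
move=> d1 m0; have d0 : (0 < d)%N by apply: ltnW.
have dm0 : (0 < d * m)%N by rewrite muln_gt0 d0.
have mulI : injective (muln d) by move=> a b /eqP; rewrite eqn_pmul2l // => /eqP.
have one_notin : 1%N \notin map (muln d) (divisors m).
  apply/mapP=> -[e _ /esym/eqP]; rewrite muln_eq1; case/andP=> /eqP d_eq1 _.
  by move: d1; rewrite d_eq1.
have := @leq_sum_uniq_sub _ (1%N :: map (muln d) (divisors m)) (divisors (d * m)) id.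
rewrite big_cons big_map -big_distrr /= add1n; apply.
- by rewrite /= one_notin (map_inj_uniq mulI) divisors_uniq.
- exact: divisors_uniq.
- move=> x; rewrite inE => /predU1P [-> | /mapP [e e_m ->]]; first exact: divisor1.
  by rewrite -dvdn_divisors // dvdn_pmul2l // dvdn_divisors.
Qed.

Section Coefficients.

Variable R : numFieldType.

Lemma E24_coef0 : E24_coef R 0 = 1.
Proof. by rewrite /E24_coef /E2_at4_coef /E2_coef /=; field. Qed.

Lemma E24_coef_mul4 m : (0 < m)%N ->
  E24_coef R (4 * m) = 8%:R * ((sigma (4 * m))%:R - 4%:R * (sigma m)%:R).
Proof.
move=> m0; rewrite /E24_coef /E2_at4_coef /E2_coef dvdn_mulr // mulKn //.
rewrite !gtn_eqF ?muln_gt0 //=.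
have -> : 24%:R = 8%:R * 3%:R :> R by rewrite -natrM.
by field.
Qed.

Lemma E24_coef_ndvd4 n : (0 < n)%N -> ~~ (4 %| n)%N ->
  E24_coef R n = 8%:R * (sigma n)%:R.
Proof.
move=> n0 n4; rewrite /E24_coef /E2_at4_coef /E2_coef (negbTE n4) gtn_eqF //.
have -> : 24%:R = 8%:R * 3%:R :> R by rewrite -natrM.
by field.
Qed.

End Coefficients.

Theorem mainTheorem7 (R : realFieldType) (alpha : R) :
  0 <= alpha -> alpha < 8%:R ->
  forall n : nat, 0 < E24_coef R n - alpha * Delta24_coef R n.
Proof.
move=> _ alpha_lt8 n; rewrite /Delta24_coef.
have [-> | n0] := posnP n; first by rewrite E24_coef0 mulr0 subr0 ltr01.
have [/dvdnP [m n_eq] | n4] := boolP (4 %| n)%N.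
  have m0 : (0 < m)%N by move: n0; rewrite n_eq muln_gt0 andbT.
  rewrite n_eq mulnC oddM [odd 4]/= mulr0 subr0 E24_coef_mul4 //.
  rewrite mulr_gt0 ?ltr0n // subr_gt0 -natrM ltr_nat.
  exact: sigma_mul_gt.
have sigma_pos : 0 < (sigma n)%:R :> R by rewrite ltr0n sigma_gt0.
rewrite E24_coef_ndvd4 //; case: (odd n); last by rewrite mulr0 subr0 mulr_gt0 // ltr0n.
by rewrite -mulrBl mulr_gt0 // subr_gt0.
Qed.
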